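(* If $\varphi$ is an automorphism of $E$ of type 4, then the eigenspace of its linearization $\varphi_\ell$ in $L$ corresponding to the eigenvalue $-1$ is nonzero.
   Context: $F$ is a field of characteristic zero, $L$ an infinite-dimensional $F$-vector space with basis $e_1,e_2,\ldots$, $E$ the Grassmann algebra of $L$. An automorphism $\varphi$ of $E$ with $\varphi^2=\mathrm{id}$ is of type 4 if for every basis $\gamma$ of $L$ no element $v\in\gamma$ satisfies $\varphi(v)=\pm v$. Linearization: write $\varphi(e_i)=u_i+v_i$ with $u_i\in L$ and $v_i$ a linear combination of monomials of length $\ge2$; $\varphi_\ell$ is the endomorphism of $E$ with $\varphi_\ell(e_i)=u_i$ for all $i$ (it is an automorphism of order dividing 2, so $\varphi_\ell$ restricted to $L$ has eigenvalues among $\pm1$). *)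

(* Concrete model of the Grassmann algebra E of a
   countably-infinite-dimensional space L with basis e_0, e_1, ...
   An element of E is a finitely supported function from finite subsets of nat
   (monomials e_{i1} ... e_{ik}, i1 < ... < ik) to F. *)
From HB Require Import structures.
From mathcomp Require Import all_boot all_order all_algebra.
From mathcomp Require Import finmap.
Set Implicit Arguments. Unset Strict Implicit. Unset Printing Implicit Defensive.
Import Order.TTheory GRing.Theory Num.Theory.
Local Open Scope ring_scope.


Section Grassmann.
Variable F : fieldType.

Definition vec := {fset nat} -> F.

Definition inE (x : vec) : Prop :=
  exists A : {fset {fset nat}}, forall S, S \notin A -> x S = 0.

Definition inL (x : vec) : Prop :=
  inE x /\ forall S, x S != 0 -> #|` S| = 1%N.

Definition vzero : vec := fun _ => 0.
Definition vadd (x y : vec) : vec := fun S => x S + y S.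
Definition vopp (x : vec) : vec := fun S => - x S.
Definition vscale (c : F) (x : vec) : vec := fun S => c * x S.
Definition vone : vec := fun S => if S == fset0 then 1 else 0.
Definition gen (i : nat) : vec := fun S => if S == [fset i]%fset then 1 else 0.

(* sign of e_S e_T = sign S T * e_(S u T) for disjoint S, T *)
Definition gsign (S T : {fset nat}) : F :=
  (-1) ^+ (\sum_(s <- enum_fset S) \sum_(t <- enum_fset T) (t < s)%N)%N.

Definition vmul (x y : vec) : vec := fun U =>
  \sum_(S <- enum_fset (fpowerset U)) gsign S (U `\` S)%fset * x S * y (U `\` S)%fset.

Definition lincomb (n : nat) (c : 'I_n -> F) (w : 'I_n -> vec) : vec :=
  fun S => \sum_(i < n) c i * w i S.

Definition basisL (gamma : vec -> Prop) : Prop :=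
  (forall v, gamma v -> inL v) /\
  (forall n (w : 'I_n -> vec) (c : 'I_n -> F),
      injective w -> (forall i, gamma (w i)) ->
      lincomb c w = vzero -> forall i, c i = 0) /\
  (forall u, inL u -> exists n (w : 'I_n -> vec) (c : 'I_n -> F),
      (forall i, gamma (w i)) /\ u = lincomb c w).

Definition alg_endo (f : vec -> vec) : Prop :=
  (forall x, inE x -> inE (f x)) /\
  (forall x y, inE x -> inE y -> f (vadd x y) = vadd (f x) (f y)) /\
  (forall c x, inE x -> f (vscale c x) = vscale c (f x)) /\
  (forall x y, inE x -> inE y -> f (vmul x y) = vmul (f x) (f y)) /\
  f vone = vone.

Definition alg_auto (f : vec -> vec) : Prop :=
  alg_endo f /\
  (forall x y, inE x -> inE y -> f x = f y -> x = y) /\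
  (forall y, inE y -> exists2 x, inE x & f x = y).

Definition involutive_on_E (f : vec -> vec) : Prop :=
  forall x, inE x -> f (f x) = x.

Definition type4 (f : vec -> vec) : Prop :=
  forall gamma, basisL gamma ->
    ~ (exists v, gamma v /\ (f v = v \/ f v = vopp v)).

Definition lin_part (x : vec) : vec := fun S => if #|` S| == 1%N then x S else 0.

Definition linearization (phi psi : vec -> vec) : Prop :=
  alg_endo psi /\ forall i, psi (gen i) = lin_part (phi (gen i)).

End Grassmann.

(* Suppose the linearization [psi] has no eigenvector for [-1] in [L].  Every
   endomorphism of [E] preserves the filtration by degree, and two endomorphisms
   that agree on the generators modulo degree 2 send an element of degree [>= d]
   to elements agreeing modulo degree [d + 1].  Since [psi] and [phi] agree on
   the generators modulo degree 2 and [phi^2 = id], [psi^2] fixes every [e_i];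
   so [e_i - psi e_i] would be a [-1]-eigenvector, whence [psi e_i = e_i], i.e.
   [phi e_i = e_i] modulo degree 2.  Then [y = phi e_i - e_i] satisfies
   [phi y = -y] and [phi y = y] modulo one degree above [y]; as [2 != 0], [y]
   lies in every degree, so [phi] fixes every [e_i], against type 4 for the
   standard basis. *)

From Pilot Require Import Defs.
From HB Require Import structures.
From mathcomp Require Import all_boot all_order all_algebra.
From mathcomp Require Import finmap.
From mathcomp Require Import zify ring.
From Stdlib Require Import FunctionalExtensionality Classical.
Set Implicit Arguments. Unset Strict Implicit. Unset Printing Implicit Defensive.
Import GRing.Theory.
Local Open Scope ring_scope.
Local Open Scope fset_scope.

Section Grassmann.
Variable F : fieldType.
Local Notation vec := (vec F).
Local Notation inE := Defs.inE.
Local Notation vsub x y := (vadd x (vopp y)).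
Implicit Types (x y : vec) (S T U : {fset nat}).

Lemma vopp_vscale x : vopp x = vscale (-1) x.
Proof. by apply: functional_extensionality => S; rewrite /vscale mulN1r. Qed.

Lemma vzero_vscale : vzero F = vscale 0 (vone F).
Proof. by apply: functional_extensionality => S; rewrite /vscale mul0r. Qed.

Lemma vopp_vsub x y : vopp (vsub x y) = vsub y x.
Proof. by apply: functional_extensionality => S; rewrite /vadd /vopp opprD opprK addrC. Qed.

Lemma vsub_eq0 x y : vsub x y = vzero F -> x = y.
Proof. by move=> e; apply: functional_extensionality => S; apply/subr0_eq/(congr1 (@^~ S) e). Qed.

Lemma sum_seq_only1 (I : eqType) (r : seq I) (G : I -> F) j :
  uniq r -> (forall i, i \in r -> i != j -> G i = 0) ->
  \sum_(i <- r) G i = if j \in r then G j else 0.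
Proof.
move=> ur h; case: ifP => jr.
  by rewrite (bigD1_seq j) //= big1_seq ?addr0 // => i /andP[ij ir]; apply: h.
by rewrite big1_seq // => i /andP[_ ir]; apply: h => //; apply: contraTneq ir => ->; rewrite jr.
Qed.

Definition supp_lt (N : nat) x :=
  forall S, x S != 0 -> forall s, s \in S -> (s < N)%N.

Lemma supp_lt_inE N x : supp_lt N x -> inE x.
Proof.
move=> bx; exists (fpowerset (seq_fset tt (iota 0 N))) => S.
apply: contraNeq => xS; rewrite fpowersetE; apply/fsubsetP => s sS.
by rewrite seq_fsetE mem_iota add0n (bx _ xS).
Qed.

Lemma inE_supp_lt x : inE x -> exists N, supp_lt N x.
Proof.
case=> A hA; exists (\max_(S <- enum_fset A) \max_(s <- enum_fset S) s.+1)%N => S xS s sS.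
have SA : S \in A by apply: contraNT xS => /hA ->; rewrite eqxx.
apply: (@leq_trans (\max_(s <- enum_fset S) s.+1)%N).
  exact: (@leq_bigmax_seq _ (enum_fset S) xpredT (fun s => s.+1) s).
exact: (@leq_bigmax_seq _ (enum_fset A) xpredT (fun S => \max_(s <- enum_fset S) s.+1)%N S).
Qed.

Lemma vmul_neq0 x y U : vmul x y U != 0 ->
  exists S, [/\ S `<=` U, x S != 0 & y (U `\` S) != 0].
Proof.
move=> h.
have : has (fun S => (x S != 0) && (y (U `\` S) != 0)) (enum_fset (fpowerset U)).
  apply: contraNT h => /hasPn xy0; apply/eqP; rewrite /vmul big1_seq // => S /andP[_ SU].
  have := xy0 S SU; case: eqP => [->|_] /=; first by rewrite mulr0 mul0r.
  by move/negPn/eqP->; rewrite mulr0.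
case/hasP => S SU /andP[xS yS]; exists S; split=> //.
by move: SU; rewrite fpowersetE.
Qed.

Lemma supp_lt_vmul N M x y :
  supp_lt N x -> supp_lt M y -> supp_lt (maxn N M) (vmul x y).
Proof.
move=> bx byy U /vmul_neq0 [S [SU xS yS]] s sU.
case sS: (s \in S); first by apply: leq_trans (leq_maxl _ _); apply: bx sS.
by apply: leq_trans (leq_maxr _ _); apply: (byy _ yS); rewrite in_fsetD sS.
Qed.

Lemma inE_vadd x y : inE x -> inE y -> inE (vadd x y).
Proof.
case=> A hA [B hB]; exists (A `|` B) => S; rewrite in_fsetU negb_or.
by case/andP=> /hA xS /hB yS; rewrite /vadd xS yS addr0.
Qed.

Lemma inE_vscale c x : inE x -> inE (vscale c x).
Proof. by case=> A hA; exists A => S /hA xS; rewrite /vscale xS mulr0. Qed.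

Lemma inE_vopp x : inE x -> inE (vopp x).
Proof. by rewrite vopp_vscale; apply: inE_vscale. Qed.

Lemma inE_vmul x y : inE x -> inE y -> inE (vmul x y).
Proof.
case/inE_supp_lt=> N bx /inE_supp_lt [M byy].
exact: supp_lt_inE (supp_lt_vmul bx byy).
Qed.

Lemma inE_lin_part x : inE x -> inE (lin_part x).
Proof. by case=> A hA; exists A => S /hA xS; rewrite /lin_part xS if_same. Qed.

Lemma inE_gen i : inE (gen F i).
Proof. by exists [fset [fset i]] => S; rewrite in_fset1 /gen => /negPf ->. Qed.

Lemma inE_vone : inE (vone F).
Proof. by exists [fset fset0] => S; rewrite in_fset1 /vone => /negPf ->. Qed.

Lemma inE_vzero : inE (vzero F).
Proof. by rewrite vzero_vscale; apply/inE_vscale/inE_vone. Qed.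

Definition vsum (s : seq nat) (f : nat -> vec) : vec :=
  foldr (fun i acc => vadd (f i) acc) (vzero F) s.

Lemma vsumE s f U : vsum s f U = \sum_(i <- s) f i U.
Proof. by elim: s => [|i s IH]; rewrite ?big_nil ?big_cons //= /vadd IH. Qed.

Lemma inE_vsum s f : (forall i, inE (f i)) -> inE (vsum s f).
Proof. by move=> h; elim: s => [|i s IH] /=; [apply: inE_vzero | apply: inE_vadd]. Qed.

Lemma vmul_fset0 x y : vmul x y fset0 = x fset0 * y fset0.
Proof.
rewrite /vmul (@sum_seq_only1 _ _ _ fset0) ?fset_uniq //.
  by rewrite fpowersetE fsub0set /gsign /= fsetD0 !big_nil expr0 mul1r.
by move=> S; rewrite fpowersetE fsubset0 => /eqP ->; rewrite eqxx.
Qed.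

Lemma vmul_genl i x U : vmul (gen F i) x U =
  if i \in U then gsign F [fset i] (U `\ i) * x (U `\ i) else 0.
Proof.
rewrite /vmul (@sum_seq_only1 _ _ _ [fset i]) ?fset_uniq //.
  by rewrite fpowersetE fsub1set /gen eqxx mulr1.
by move=> S _ /negbTE h; rewrite /gen h mulr0 mul0r.
Qed.

Lemma vmul_gen_gen i : vmul (gen F i) (gen F i) = vzero F.
Proof.
apply: functional_extensionality => U; rewrite vmul_genl /gen /vzero.
case: ifP => // iU; case: eqP => [h|]; last by rewrite mulr0.
by have := in_fset1 i i; rewrite eqxx -h in_fsetD1 eqxx.
Qed.

Lemma gsign_fset1 i T : (forall t, t \in T -> (i < t)%N) -> gsign F [fset i] T = 1.
Proof.
move=> h; rewrite /gsign big1_seq ?expr0 // => s si.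
apply: big1_seq => t tT; move: si; rewrite in_fset1 => /eqP ->.
by rewrite ltnNge (ltnW (h t tT)).
Qed.

Lemma vmul_subE (x1 y1 x2 y2 : vec) U :
  (vmul x1 y1 U - vmul x2 y2 U = vmul (vsub x1 x2) y1 U + vmul x2 (vsub y1 y2) U)%R.
Proof.
rewrite /vmul -sumrB -big_split /=; apply: eq_bigr => S _ /=.
rewrite /vadd /vopp; ring.
Qed.

Definition deg_ge (d : nat) x := forall S, (#|` S| < d)%N -> x S = 0.
Definition deg_le (d : nat) x := forall S, (d < #|` S|)%N -> x S = 0.

Lemma deg_ge_vmul a b x y : deg_ge a x -> deg_ge b y -> deg_ge (a + b) (vmul x y).
Proof.
move=> hx hy U hU; rewrite /vmul big1_seq // => S /andP[_]; rewrite fpowersetE => SU.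
have := cardfsDS SU; have := fsubset_leq_card SU => SleU DS.
have [Sa|aS] := ltnP #|` S| a; first by rewrite hx ?mulr0 ?mul0r.
by rewrite hy ?mulr0 //; lia.
Qed.

Lemma deg_le_vmul a b x y : deg_le a x -> deg_le b y -> deg_le (a + b) (vmul x y).
Proof.
move=> hx hy U hU; rewrite /vmul big1_seq // => S /andP[_]; rewrite fpowersetE => SU.
have := cardfsDS SU; have := fsubset_leq_card SU => SleU DS.
have [aS|Sa] := ltnP a #|` S|; first by rewrite hx ?mulr0 ?mul0r.
by rewrite hy ?mulr0 //; lia.
Qed.

Lemma deg_ge_vopp d x : deg_ge d x -> deg_ge d (vopp x).
Proof. by move=> hx S /hx; rewrite /vopp => ->; rewrite oppr0. Qed.

Lemma deg_le_eq d x y : deg_le d x -> deg_le d y -> deg_ge d.+1 (vsub x y) -> x = y.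
Proof.
move=> hx hy hxy; apply: functional_extensionality => S.
have [Sd|dS] := ltnP #|` S| d.+1; first exact/subr0_eq/hxy.
by rewrite hx ?hy.
Qed.

Lemma deg_ge_eq0 x : (forall d, deg_ge d x) -> x = vzero F.
Proof. by move=> hx; apply: functional_extensionality => S; apply: (hx #|` S|.+1). Qed.

Definition above (i : nat) T := all (fun t => (i < t)%N) (enum_fset T).

Definition cofactor (i : nat) y : vec :=
  fun T => if above i T then y (i |` T) else 0.

Lemma aboveP i T : reflect (forall t, t \in T -> (i < t)%N) (above i T).
Proof. exact: allP. Qed.

Lemma above_cardU1 i T : above i T -> #|` i |` T| = #|` T|.+1.
Proof. by move/aboveP=> h; rewrite cardfsU1; case: (boolP (i \in T)) => // /h; rewrite ltnn. Qed.

Lemma vmul_gen_cofactor i y U : vmul (gen F i) (cofactor i y) U =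
  if (i \in U) && above i (U `\ i) then y U else 0.
Proof.
rewrite vmul_genl /cofactor; case: ifP => iU //=; case: ifP => h; last by rewrite mulr0.
by rewrite gsign_fset1 ?mul1r ?fsetD1K //; apply/aboveP.
Qed.

Lemma gen_expansion N y : supp_lt N y ->
  y = vadd (vscale (y fset0) (vone F))
           (vsum (iota 0 N) (fun i => vmul (gen F i) (cofactor i y))).
Proof.
move=> hb; apply: functional_extensionality => U.
rewrite /vadd /vscale /vone vsumE; under eq_bigr do rewrite vmul_gen_cofactor.
have [->|/fset0Pn U0] := eqVneq U fset0.
  by rewrite big1 ?mulr1 ?addr0 // => i _; rewrite in_fset0.
rewrite mulr0 add0r; have [->|yU] := eqVneq (y U) 0.
  by rewrite big1 // => i _; case: ifP.
have [m mU mmin] := ex_minnP U0.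
rewrite (@sum_seq_only1 _ _ _ m) ?iota_uniq //.
  rewrite mem_iota add0n (hb _ yU _ mU) mU /=; case: ifP => // /negP[].
  by apply/aboveP => t; rewrite in_fsetD1 => /andP[tm tU]; rewrite ltn_neqAle eq_sym tm mmin.
move=> i _ im; case: ifP => // /andP[iU /aboveP h].
have := h m; rewrite in_fsetD1 mU eq_sym im => /(_ isT).
by rewrite ltnNge mmin.
Qed.

Lemma supp_lt_cofactor N i y : supp_lt N y -> supp_lt N (cofactor i y).
Proof.
move=> hb T; rewrite /cofactor; case: ifP => _; last by rewrite eqxx.
by move=> h t tT; apply: (hb _ h); rewrite in_fset1U tT orbT.
Qed.

Lemma inE_cofactor i y : inE y -> inE (cofactor i y).
Proof. by case/inE_supp_lt=> N /(@supp_lt_cofactor N i)/supp_lt_inE. Qed.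

Lemma deg_ge_cofactor d i y : deg_ge d.+1 y -> deg_ge d (cofactor i y).
Proof. by move=> h T hT; rewrite /cofactor; case: ifP => // c; rewrite h // above_cardU1. Qed.

Lemma deg_le_cofactor d i y : deg_le d.+1 y -> deg_le d (cofactor i y).
Proof. by move=> h T hT; rewrite /cofactor; case: ifP => // c; rewrite h // above_cardU1. Qed.

Lemma cofactor_deg_le0 i y : deg_le 0 y -> cofactor i y = vzero F.
Proof.
move=> h; apply: functional_extensionality => T; rewrite /cofactor /vzero.
by case: ifP => // c; rewrite h // above_cardU1.
Qed.

Lemma vone_card_gt0 U : (0 < #|` U|)%N -> vone F U = 0.
Proof. by rewrite cardfs_gt0 /vone => /negPf ->. Qed.

Lemma deg_ge1 x : x fset0 = 0 -> deg_ge 1 x.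
Proof. by move=> x0 S; rewrite ltnS leqn0 => /eqP/cardfs0_eq ->. Qed.

Section Endomorphism.
Variable f : vec -> vec.
Hypothesis f_endo : alg_endo f.

Lemma endo_inE x : inE x -> inE (f x).
Proof. by case: f_endo => h _; apply: h. Qed.

Lemma endo_add x y : inE x -> inE y -> f (vadd x y) = vadd (f x) (f y).
Proof. by case: f_endo => _ [h _]; apply: h. Qed.

Lemma endo_scale c x : inE x -> f (vscale c x) = vscale c (f x).
Proof. by case: f_endo => _ [_ [h _]]; apply: h. Qed.

Lemma endo_mul x y : inE x -> inE y -> f (vmul x y) = vmul (f x) (f y).
Proof. by case: f_endo => _ [_ [_ [h _]]]; apply: h. Qed.

Lemma endo_one : f (vone F) = vone F.
Proof. by case: f_endo => _ [_ [_ [_ h]]]. Qed.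

Lemma endo_zero : f (vzero F) = vzero F.
Proof. by rewrite vzero_vscale endo_scale ?endo_one //; apply: inE_vone. Qed.

Lemma endo_sub x y : inE x -> inE y -> f (vsub x y) = vsub (f x) (f y).
Proof.
by move=> hx hy; rewrite endo_add ?vopp_vscale ?endo_scale //; apply: inE_vscale.
Qed.

Lemma endo_vsum s G : (forall i, inE (G i)) -> f (vsum s G) = vsum s (f \o G).
Proof.
move=> h; elim: s => [|i s IH] /=; first exact: endo_zero.
by rewrite endo_add ?IH //; apply: inE_vsum.
Qed.

Lemma endo_expansion N y : supp_lt N y ->
  f y = vadd (vscale (y fset0) (vone F))
             (vsum (iota 0 N) (fun i => vmul (f (gen F i)) (f (cofactor i y)))).
Proof.
move=> hb; have hc i : inE (cofactor i y) := inE_cofactor i (supp_lt_inE hb).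
have hgc i : inE (vmul (gen F i) (cofactor i y)) by apply: inE_vmul (inE_gen i) (hc i).
rewrite {1}(gen_expansion hb) endo_add; last 2 first.
- by apply/inE_vscale/inE_vone.
- by apply: inE_vsum.
rewrite endo_scale ?endo_one ?endo_vsum //; last exact: inE_vone.
congr (vadd _ (vsum _ _)); apply: functional_extensionality => i /=.
exact: endo_mul (inE_gen i) (hc i).
Qed.

(* Squaring kills a generator, and [F] has no nilpotents. *)
Lemma endo_gen_fset0 i : f (gen F i) fset0 = 0.
Proof.
have := congr1 (@^~ fset0) (endo_mul (inE_gen i) (inE_gen i)).
rewrite vmul_gen_gen endo_zero vmul_fset0 /vzero => /esym/eqP.
by rewrite mulf_eq0 orbb => /eqP.
Qed.

Lemma endo_fset0 y : inE y -> f y fset0 = y fset0.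
Proof.
case/inE_supp_lt=> N hb; rewrite (endo_expansion hb) /vadd /vscale /vone eqxx mulr1 vsumE.
by rewrite big1 ?addr0 // => i _; rewrite vmul_fset0 endo_gen_fset0 mul0r.
Qed.

Lemma deg_ge_endo d y : inE y -> deg_ge d y -> deg_ge d (f y).
Proof.
elim: d y => [|d IH] y hy hd U //; have [N hb] := inE_supp_lt hy.
rewrite (endo_expansion hb) /vadd /vscale vsumE (hd fset0) ?cardfs0 // mul0r add0r.
move=> hU; rewrite big1 // => i _.
have fc : deg_ge d (f (cofactor i y)) by apply/IH/deg_ge_cofactor/hd/inE_cofactor.
by rewrite (deg_ge_vmul (deg_ge1 (endo_gen_fset0 i)) fc).
Qed.

Lemma deg_le_endo : (forall i, deg_le 1 (f (gen F i))) ->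
  forall d y, inE y -> deg_le d y -> deg_le d (f y).
Proof.
move=> hgen; elim=> [|d IH] y hy hd U hU; have [N hb] := inE_supp_lt hy.
all: rewrite (endo_expansion hb) /vadd /vscale vsumE vone_card_gt0 ?(leq_ltn_trans _ hU) //.
all: rewrite mulr0 add0r big1 // => i _.
  by rewrite cofactor_deg_le0 // endo_zero /vmul big1 // => S _; rewrite /vzero mulr0.
have fc : deg_le d (f (cofactor i y)) by apply/IH/deg_le_cofactor/hd/inE_cofactor.
by rewrite (deg_le_vmul (hgen i) fc).
Qed.

End Endomorphism.

Section TwoEndomorphisms.
Variables f g : vec -> vec.
Hypotheses (f_endo : alg_endo f) (g_endo : alg_endo g).
Hypothesis fg_gen : forall i, deg_ge 2 (vsub (f (gen F i)) (g (gen F i))).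

(* [f y - g y = \sum_i (f e_i - g e_i) f (cofactor i y)
                  + g e_i (f (cofactor i y) - g (cofactor i y))] *)
Lemma deg_ge_endo_vsub d y : inE y -> deg_ge d y -> deg_ge d.+1 (vsub (f y) (g y)).
Proof.
elim: d y => [|d IH] y hy hd.
  by apply: deg_ge1; rewrite /vadd /vopp !endo_fset0 ?subrr.
move=> U hU; have [N hb] := inE_supp_lt hy.
rewrite /vadd /vopp (endo_expansion f_endo hb) (endo_expansion g_endo hb).
rewrite /vadd /vopp /vscale !vsumE opprD addrACA subrr add0r -sumrB big1 // => i _.
have hc : inE (cofactor i y) := inE_cofactor i hy.
have dc : deg_ge d (cofactor i y) := deg_ge_cofactor i hd.
rewrite vmul_subE (deg_ge_vmul (fg_gen i) (deg_ge_endo f_endo hc dc)) ?add2n //.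
by rewrite (deg_ge_vmul (deg_ge1 (endo_gen_fset0 g_endo i)) (IH _ hc dc)) ?addr0.
Qed.

End TwoEndomorphisms.

Lemma alg_endo_id : alg_endo (F := F) id.
Proof. by []. Qed.

Lemma deg_ge1_lin_part x : deg_ge 1 (lin_part x).
Proof. by apply: deg_ge1; rewrite /lin_part cardfs0. Qed.

Lemma deg_ge2_vsub_lin_part x : x fset0 = 0 -> deg_ge 2 (vsub x (lin_part x)).
Proof.
move=> x0 S S2; rewrite /vadd /vopp /lin_part; case: eqP => [_|S1]; first by rewrite subrr.
have /cardfs0_eq -> : #|` S| = 0%N by lia.
by rewrite x0 subr0.
Qed.

Lemma gen_fset1 i j : gen F i [fset j] = (j == i)%:R.
Proof.
rewrite /gen; have [->|ji] := eqVneq j i; first by rewrite eqxx.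
by case: eqP => // /fset1_inj /eqP; rewrite (negPf ji).
Qed.

Lemma inL_gen i : inL (gen F i).
Proof.
split; first exact: inE_gen.
by move=> S; rewrite /gen; case: ifP => [/eqP -> _|]; rewrite ?cardfs1 ?eqxx.
Qed.

Lemma inL_lin_part x : inE x -> inL (lin_part x).
Proof.
split=> [|S]; first exact: inE_lin_part.
by rewrite /lin_part; case: ifP => [/eqP //|_]; rewrite eqxx.
Qed.

Lemma inL_vsub x y : inL x -> inL y -> inL (vsub x y).
Proof.
move=> [hx x1] [hy y1]; split; first by apply/inE_vadd/inE_vopp.
move=> S; rewrite /vadd /vopp; have [x0|/x1 xS1 _ //] := eqVneq (x S) 0.
by rewrite x0 add0r oppr_eq0 => /y1.
Qed.

Lemma inL_deg_le1 x : inL x -> deg_le 1 x.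
Proof. by case=> _ x1 S S1; apply/eqP; apply: contraTT S1 => /x1 ->. Qed.

Lemma free_gen n (w : 'I_n -> vec) c : injective w ->
  (forall k, exists i, w k = gen F i) -> lincomb c w = vzero F -> forall k, c k = 0.
Proof.
move=> w_inj w_gen c0 k; have [ik ek] := w_gen k.
have := congr1 (@^~ [fset ik]) c0.
rewrite /lincomb /vzero (bigD1 k) //= ek gen_fset1 eqxx mulr1 big1 ?addr0 // => j jk.
have [ij ej] := w_gen j; rewrite ej gen_fset1; case: eqP => [eij|]; last by rewrite mulr0.
by case/eqP: jk; apply: w_inj; rewrite ej ek eij.
Qed.

Lemma span_gen u : inL u -> exists n (w : 'I_n -> vec) (c : 'I_n -> F),
  (forall k, exists i, w k = gen F i) /\ u = lincomb c w.
Proof.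
move=> [hu u1]; have [N hb] := inE_supp_lt hu.
exists N, (fun j : 'I_N => gen F j), (fun j : 'I_N => u [fset (j : nat)]).
split=> [j|]; first by exists j.
apply: functional_extensionality => S; rewrite /lincomb.
rewrite -(big_mkord xpredT (fun j => u [fset j] * gen F j S)).
case: (boolP (#|` S| == 1%N)) => [/cardfs1P [s ->]|S1].
  rewrite (@sum_seq_only1 _ _ _ s) ?iota_uniq //; last first.
    by move=> j _ js; rewrite gen_fset1 eq_sym (negPf js) mulr0.
  rewrite mem_index_iota gen_fset1 eqxx mulr1; case: ifP => // /negbT sN.
  by apply/eqP; apply: contraNT sN => /hb/(_ s (fset11 s)).
rewrite big1 => [|j _]; last first.
  rewrite /gen; case: eqP => [Sj|_]; last by rewrite mulr0.
  by rewrite Sj cardfs1 in S1.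
by apply/eqP; apply: contraNT S1 => /u1 ->.
Qed.

Lemma basisL_gen : basisL (fun v => exists i, v = gen F i).
Proof.
split; first by move=> v [i ->]; apply: inL_gen.
by split; [apply: free_gen | apply: span_gen].
Qed.

Section Involution.
Variable phi : vec -> vec.
Hypotheses (phi_endo : alg_endo phi) (phi_invol : involutive_on_E phi).

Lemma involution_fixes_gen : 2%:R != 0 :> F ->
  (forall j, lin_part (phi (gen F j)) = gen F j) -> forall i, phi (gen F i) = gen F i.
Proof.
move=> two lin_id i; set y := vsub (phi (gen F i)) (gen F i).
have ig := inE_gen i; have iphig := endo_inE phi_endo ig.
have iy : inE y by apply/inE_vadd/inE_vopp.
have phi_y : phi y = vopp y by rewrite endo_sub ?phi_invol ?vopp_vsub.
have id_close j : deg_ge 2 (vsub (phi (gen F j)) (id (gen F j))).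
  by rewrite /= -{2}(lin_id j); apply/deg_ge2_vsub_lin_part/endo_gen_fset0.
apply/vsub_eq0/deg_ge_eq0; elim=> [//|d IH] S hS.
have := deg_ge_endo_vsub phi_endo alg_endo_id id_close iy IH hS.
rewrite phi_y /vadd /vopp /= -opprD => /eqP.
by rewrite oppr_eq0 -mulr2n -mulr_natr mulf_eq0 (negPf two) orbF => /eqP.
Qed.

End Involution.

Section Linearization.
Variables phi psi : vec -> vec.
Hypotheses (phi_endo : alg_endo phi) (phi_invol : involutive_on_E phi).
Hypothesis psi_endo : alg_endo psi.
Hypothesis psi_gen : forall i, psi (gen F i) = lin_part (phi (gen F i)).

Lemma deg_ge2_linearization_gen i : deg_ge 2 (vsub (psi (gen F i)) (phi (gen F i))).
Proof.
by rewrite psi_gen -vopp_vsub; apply/deg_ge_vopp/deg_ge2_vsub_lin_part/endo_gen_fset0.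
Qed.

(* Modulo degree 2, [psi u = phi u = phi (phi g) = g]; both sides are linear. *)
Lemma linearization_invol_gen i : psi (psi (gen F i)) = gen F i.
Proof.
set g := gen F i; set u := psi g.
have ig : inE g := inE_gen i; have iphig := endo_inE phi_endo ig.
have iu : inE u by rewrite /u psi_gen; apply: inE_lin_part.
have u1 : deg_ge 1 u by rewrite /u psi_gen; apply: deg_ge1_lin_part.
have phi_close : deg_ge 2 (phi (vsub (phi g) u)).
  apply: (deg_ge_endo phi_endo); first exact/inE_vadd/inE_vopp.
  by rewrite /u psi_gen; apply/deg_ge2_vsub_lin_part/endo_gen_fset0.
have psi_close := deg_ge_endo_vsub psi_endo phi_endo deg_ge2_linearization_gen iu u1.
have psi_lin j : deg_le 1 (psi (gen F j)).
  by rewrite psi_gen; apply/inL_deg_le1/inL_lin_part/endo_inE/inE_gen.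
apply: (deg_le_eq (deg_le_endo psi_endo psi_lin iu (psi_lin i))).
  exact/inL_deg_le1/inL_gen.
move=> S hS; have := psi_close S hS; have := phi_close S hS.
rewrite endo_sub ?phi_invol // /vadd /vopp.
by move=> /eqP; rewrite subr_eq0 => /eqP ->.
Qed.

Lemma linearization_fixes_gen :
  (forall x, inL x -> psi x = vopp x -> x = vzero F) -> forall i, psi (gen F i) = gen F i.
Proof.
move=> no_eigen i; have ig := inE_gen i; have iu := endo_inE psi_endo ig.
apply/esym/vsub_eq0/no_eigen.
  rewrite psi_gen; apply: inL_vsub (inL_gen i) (inL_lin_part (endo_inE phi_endo ig)).
by rewrite endo_sub ?linearization_invol_gen ?vopp_vsub.
Qed.

End Linearization.

End Grassmann.

Theorem mainTheorem15 (F : fieldType) (Fchar0 : [pchar F] =i pred0)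
    (phi : vec F -> vec F) :
  alg_auto phi -> involutive_on_E phi -> type4 phi ->
  forall psi : vec F -> vec F, linearization phi psi ->
  exists x : vec F, inL x /\ x <> vzero F /\ psi x = vopp x.
Proof.
move=> [phi_endo _] phi_invol phi_type4 psi [psi_endo psi_gen].
apply: NNPP => no_eigen.
have psi_id : forall i, psi (gen F i) = gen F i.
  apply: (linearization_fixes_gen phi_endo phi_invol psi_endo psi_gen) => x xL psi_x.
  by apply: NNPP => x0; apply: no_eigen; exists x.
have two : 2%:R != 0 :> F by rewrite (pcharf0P F).1.
have lin_id j : lin_part (phi (gen F j)) = gen F j by rewrite -psi_gen psi_id.
apply: (phi_type4 _ (basisL_gen F)); exists (gen F 0); split; first by exists 0%N.
by left; apply: involution_fixes_gen phi_endo phi_invol two lin_id 0.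
Qed.
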